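(* For every $q\ge2$ and integers $n>h\ge1$, $$M_q(n,h)\ge\frac{\binom{n+q-1}{q-1}}{\phi(h,q)},\qquad M_q(n,h)\le\frac{\binom{n+q-1}{q-1}}{\beta(h,q)}+\sum_{j=1}^{q\lceil h/2\rceil}\binom{n+q-1-j}{q-2}.$$
   Context: $\triangle_n^{q-1}=\{\mathbf x\in\mathbb Z^q:x_i\ge0,\sum_ix_i=n\}$ (multisets of size $n$ over $\{0,\dots,q-1\}$), with $d_1(\mathbf x,\mathbf y)=\frac12\sum_i|x_i-y_i|$. $M_q(n,h)$ is the largest cardinality of a subset of $\triangle_n^{q-1}$ in which distinct elements are at $d_1$-distance $>h$ (equivalently, of a multiset code correcting $h$ deletions). $\beta(h,q)=\sum_{j\ge0}\binom{q-1}{j}\binom{\lceil h/2\rceil}{j}\binom{\lfloor h/2\rfloor+q-1-j}{q-1-j}$. $\phi(h,q)$ is the smallest order of a finite Abelian group containing a $B_h$ set of cardinality $q$, where a set $\{b_0,\dots,b_{q-1}\}$ in an Abelian group is a $B_h$ set if the sums $b_{i_1}+\dots+b_{i_h}$, $0\le i_1\le\dots\le i_h\le q-1$, are pairwise different. Convention: $\binom ab=0$ for integers $a<b$. *)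

From HB Require Import structures.
From mathcomp Require Import all_boot all_order all_algebra.
Set Implicit Arguments. Unset Strict Implicit. Unset Printing Implicit Defensive.
Import Order.TTheory GRing.Theory Num.Theory.

(* Points of the simplex triangle_n^{q-1}: vectors x in N^q with sum n.
   Coordinates are necessarily <= n, so we take them in 'I_n.+1 to get a
   finite ambient type. *)
Definition point (q n : nat) := {ffun 'I_q -> 'I_n.+1}.

Definition in_simplex (q n : nat) (x : point q n) : bool :=
  \sum_(i < q) (x i : nat) == n.

Definition absdiff (a b : nat) : nat := (a - b) + (b - a).

Definition d1 (q n : nat) (x y : point q n) : rat :=
  ((\sum_(i < q) absdiff (x i) (y i))%:R / 2)%R.

Definition is_code (q n h : nat) (C : {set point q n}) : bool :=
  [forall x in C, in_simplex x] &&
  [forall x in C, forall y in C, (x != y) ==> (h%:R < d1 x y)%R].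

Definition M (q n h : nat) : nat :=
  \max_(C : {set point q n} | is_code h C) #|C|.

(* beta(h,q) = sum_{j>=0} C(q-1,j) C(ceil(h/2),j) C(floor(h/2)+q-1-j, q-1-j);
   terms with j > q-1 vanish since C(q-1,j)=0. *)
Definition beta (h q : nat) : nat :=
  \sum_(j < q) 'C(q - 1, j) * 'C(uphalf h, j) * 'C(h./2 + q - 1 - j, q - 1 - j).

(* {b_0,...,b_{q-1}} (b injective, so the set has cardinality q) is a B_h set
   in the abelian group G: the sums b_{i_1}+...+b_{i_h} over
   0 <= i_1 <= ... <= i_h <= q-1 are pairwise different. *)
Definition Bh_set (G : zmodType) (h q : nat) (b : 'I_q -> G) : Prop :=
  injective b /\
  forall s t : h.-tuple 'I_q,
    sorted (fun i j : 'I_q => (i <= j)%N) s ->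
    sorted (fun i j : 'I_q => (i <= j)%N) t ->
    (\sum_(k < h) b (tnth s k))%R = (\sum_(k < h) b (tnth t k))%R -> s = t.

Definition is_phi (h q m : nat) : Prop :=
  (exists (G : finZmodType) (b : 'I_q -> G), Bh_set h b /\ #|G| = m) /\
  (forall (G : finZmodType) (b : 'I_q -> G), Bh_set h b -> (m <= #|G|)%N).

(* If b_0, ..., b_(q-1) is a B_h set in a finite abelian group G,
   two points x, y of the simplex with sum_i x_i b_i = sum_i y_i b_i and
   d_1(x, y) <= h coincide: the positive and negative parts of x - y, padded to
   size h, are multisets of size h with equal b-sums.  So every fibre of
   x |-> sum_i x_i b_i is a code, and by pigeonhole some fibre has at least
   |simplex| / |G| points.

   Let a = ceil(h/2) and b = floor(h/2).  A codeword x with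
   x_0 >= a and x_j >= b (j >= 1) is the centre of the ball of points
   x + (- sum_j z_j, z), where z ranges over the integer vectors with positive
   part at most a and negative part at most b.  Such a ball lies in the simplex
   and has beta(h,q) points, and the balls of distinct codewords are disjoint,
   since a common point puts their centres at distance at most a + b = h.  The
   other codewords lie outside the box {x_0 >= a, x_j >= b}, and the simplex
   points outside that box are counted by a telescoping sum of binomials. *)

From HB Require Import structures.
From mathcomp Require Import all_boot all_order all_algebra zify.
From Stdlib Require Import Classical Wf_nat.
Import Order.TTheory GRing.Theory Num.Theory.
Set Implicit Arguments. Unset Strict Implicit. Unset Printing Implicit Defensive.

Lemma sum_bin_col N k : \sum_(u < N) 'C(u, k) = 'C(N, k.+1).
Proof. by elim: N => [|N IH]; rewrite ?big_ord0 // big_ord_recr IH. Qed.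

Lemma sum_bin_rev a k : \sum_(p < a.+1) 'C(a - p, k) = 'C(a.+1, k.+1).
Proof.
rewrite -sum_bin_col (reindex_inj rev_ord_inj) /=.
by apply: eq_bigr => p _; rewrite subSS subKn // -ltnS.
Qed.

Lemma sum_bin_shift b k : \sum_(u < b) 'C(u + k, k) = 'C(b + k, k.+1).
Proof.
elim: b => [|b IH]; first by rewrite big_ord0 bin_small.
by rewrite big_ord_recr IH addSn.
Qed.

Lemma leq_sum_ord q (F : 'I_q -> nat) i : F i <= \sum_j F j.
Proof. by rewrite (bigD1 i) //= leq_addr. Qed.

Lemma bin_telescope N r K : K <= N ->
  'C(N + r.+1, r.+1) = 'C(N - K + r.+1, r.+1) + \sum_(1 <= j < K.+1) 'C(N + r.+1 - j, r).
Proof.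
elim: K => [|K IH] le_KN; first by rewrite subn0 big_geq // addn0.
rewrite IH ?(ltnW le_KN) // [in RHS]big_nat_recr //= addnC [RHS]addnCA; congr addn.
have -> : N - K + r.+1 = (N - K.+1 + r.+1).+1 by lia.
by rewrite binS (_ : N - K.+1 + r.+1 = N + r.+1 - K.+1) //; lia.
Qed.

Lemma leq_sum_nat_widen (F : nat -> nat) m K L : K <= L ->
  \sum_(m <= j < K) F j <= \sum_(m <= j < L) F j.
Proof.
move=> le_KL; case: (leqP m K) => [le_mK | lt_Km]; last by rewrite big_geq // ltnW.
by rewrite [X in _ <= X](big_cat_nat (n := K)) ?leq_addr.
Qed.

(* [beta h (m+1)] for a = ceil(h/2) and b = floor(h/2); it counts the integer
   vectors of length m with positive part at most a and negative part at most b
   (see [card_offsets]). *)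
Definition ball_size m a b :=
  \sum_(j < m.+1) 'C(m, j) * 'C(a, j) * 'C(b + (m - j), m - j).

Lemma ball_size0 a b : ball_size 0 a b = 1.
Proof. by rewrite /ball_size big_ord1 subnn !bin0. Qed.

(* The first coordinate is either some p >= 0 or some u - b < 0. *)
Lemma ball_sizeS m a b :
  ball_size m.+1 a b = \sum_(p < a.+1) ball_size m (a - p) b + \sum_(u < b) ball_size m a u.
Proof.
set D := fun j : nat => 'C(b + (m - j), m - j).
have Ea : \sum_(p < a.+1) ball_size m (a - p) b
    = \sum_(j < m.+1) 'C(m, j) * 'C(a, j.+1) * D j
    + \sum_(j < m.+1) 'C(m, j) * 'C(a, j) * D j.
  rewrite /ball_size exchange_big -big_split /=; apply: eq_bigr => j _.
  under eq_bigr do rewrite mulnAC.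
  by rewrite -big_distrr /= sum_bin_rev binS /D; lia.
have Eb : \sum_(u < b) ball_size m a u
    = \sum_(j < m.+1) 'C(m, j) * 'C(a, j) * 'C(b + (m - j), (m - j).+1).
  rewrite /ball_size exchange_big /=; apply: eq_bigr => j _.
  by rewrite -big_distrr sum_bin_shift.
have Esplit : ball_size m.+1 a b = 'C(b + m.+1, m.+1)
    + \sum_(j < m.+1) 'C(m, j.+1) * 'C(a, j.+1) * D j
    + \sum_(j < m.+1) 'C(m, j) * 'C(a, j.+1) * D j.
  rewrite /ball_size big_ord_recl /= !bin0 subn0 !mul1n -addnA -big_split /=.
  congr addn; apply: eq_bigr => j _.
  by rewrite /bump /= add1n subSS binS /D; lia.
have Ediag : 'C(b + m.+1, m.+1) + \sum_(j < m.+1) 'C(m, j.+1) * 'C(a, j.+1) * D j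
    = \sum_(j < m.+1) 'C(m, j) * 'C(a, j) * 'C((b + (m - j)).+1, (m - j).+1).
  rewrite big_ord_recr /= (bin_small (ltnSn m)) !mul0n addn0.
  rewrite [RHS]big_ord_recl /= !bin0 subn0.
  rewrite !mul1n addnS; congr addn; apply: eq_bigr => j _.
  have lt_jm := ltn_ord j.
  rewrite /bump /= add1n /D.
  have -> : m - j = (m - j.+1).+1 by rewrite subnSK.
  by rewrite addnS.
rewrite Ea Eb Esplit Ediag addnC -addnA; congr addn; rewrite -big_split /=.
by apply: eq_bigr => j _; rewrite binS /D; lia.
Qed.

Lemma ball_size_gt0 m a b : 0 < ball_size m a b.
Proof.
rewrite /ball_size big_ord_recl /= !bin0 subn0 !mul1n.
by apply: leq_trans (leq_addr _ _); rewrite bin_gt0 leq_addl.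
Qed.

Lemma beta_ball_size h q : beta h q.+1 = ball_size q (uphalf h) h./2.
Proof.
rewrite /beta /ball_size subSS subn0; apply: eq_bigr => j _.
by rewrite addnS subSS subn0 addnBA // -ltnS.
Qed.

Lemma card_tuple_cons (T : finType) m (P : pred (m.+1.-tuple T)) :
  #|[set t | P t]| = \sum_(x : T) #|[set t : m.-tuple T | P [tuple of x :: t]]|.
Proof.
under [RHS]eq_bigr do rewrite -sum1dep_card.
rewrite pair_big_dep -sum1dep_card.
rewrite (reindex (fun p : T * m.-tuple T => [tuple of p.1 :: p.2])) //=.
exists (fun t => (thead t, [tuple of behead t])) => [[x t] _ | t _] /=.
  by congr pair; apply: val_inj.
by rewrite [RHS]tuple_eta.
Qed.

Lemma leq_add_split x y a : (x + y <= a) = (x <= a) && (y <= a - x).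
Proof. by apply/idP/andP => [?|[]]; [split; lia | lia]. Qed.

Lemma sum_ord_window c lo k (F : nat -> nat) : lo + k <= c ->
    (forall v, v < c -> (v < lo) || (lo + k <= v) -> F v = 0) ->
  \sum_(v < c) F v = \sum_(u < k) F (lo + u).
Proof.
move=> le_c F0; rewrite -(big_mkord xpredT F).
rewrite (big_cat_nat (n := lo)) ?(leq_trans (leq_addr k lo)) //=.
rewrite (big_cat_nat (m := lo) (n := lo + k)) ?leq_addr //=.
rewrite [X in X + _]big1_seq => [|v /andP[_]]; last first.
  by rewrite mem_index_iota => /andP[_ ?]; apply: F0; lia.
rewrite [X in _ + (_ + X)]big1_seq => [|v /andP[_]]; last first.
  by rewrite mem_index_iota => /andP[? ?]; apply: F0; lia.
rewrite add0n addn0 -{1}[lo]add0n big_addn addKn big_mkord.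
by apply: eq_bigr => u _; rewrite addnC.
Qed.

(* A tuple t stands for the integer vector (t_j - b0)_j. *)
Definition offsets (c b0 m a b : nat) : {set m.-tuple 'I_c} :=
  [set t : m.-tuple 'I_c | (\sum_(v <- t) (v - b0) <= a) && (\sum_(v <- t) (b0 - v) <= b)].

Lemma card_offsetsS c b0 m a b : #|offsets c b0 m.+1 a b| =
  \sum_(v < c) ((v - b0 <= a) && (b0 - v <= b))
                 * #|offsets c b0 m (a - (v - b0)) (b - (b0 - v))|.
Proof.
rewrite card_tuple_cons; apply: eq_bigr => v _.
have [/andP[ha hb] | hv] := boolP ((v - b0 <= a) && (b0 - v <= b)).
  by rewrite mul1n; apply: eq_card => t; rewrite !inE /= !big_cons !leq_add_split ha hb.
rewrite mul0n; apply: eq_card0 => t; rewrite !inE /= !big_cons !leq_add_split.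
by apply/negP => /andP[/andP[ha _] /andP[hb _]]; rewrite ha hb in hv.
Qed.

Lemma card_offsets c b0 m a b :
  a + b0 < c -> b <= b0 -> #|offsets c b0 m a b| = ball_size m a b.
Proof.
elim: m a b => [|m IH] a b lt_c le_b.
  rewrite ball_size0 -(expn0 #|'I_c|) -card_tuple -cardsT.
  by apply: eq_card => t; rewrite !inE tuple0 !big_nil.
rewrite card_offsetsS (@sum_ord_window c (b0 - b) (b + a.+1)
  (fun v => ((v - b0 <= a) && (b0 - v <= b))
              * #|offsets c b0 m (a - (v - b0)) (b - (b0 - v))|)); first last.
- move=> v _ out_v.
  by rewrite (_ : _ && _ = false) //; apply/negbTE; rewrite negb_and -!ltnNge; lia.
- lia.
rewrite big_split_ord /= ball_sizeS [RHS]addnC; congr addn; apply: eq_bigr => i _.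
- have lt_ib := ltn_ord i.
  have -> : b0 - b + i - b0 = 0 by lia.
  have -> : b0 - (b0 - b + i) = b - i by lia.
  rewrite leq_subr /= mul1n subn0 subKn ?(ltnW lt_ib) // IH //.
  exact: leq_trans (ltnW lt_ib) le_b.
- have lt_ia := ltn_ord i.
  have -> : b0 - b + (b + i) - b0 = i by lia.
  have -> : b0 - (b0 - b + (b + i)) = 0 by lia.
  rewrite -ltnS lt_ia /= mul1n subn0 IH //.
  exact: leq_ltn_trans (leq_add (leq_subr i a) (leqnn b0)) lt_c.
Qed.

Lemma sum_count_mem (T : finType) (s : seq T) : \sum_i count_mem i s = size s.
Proof.
elim: s => [|y s IH] /=; first by rewrite big1.
rewrite big_split /= IH (bigD1 y) //= eqxx big1 // => i /negbTE.
by rewrite eq_sym => ->.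
Qed.

Section LinearCombinations.

Variables (G : zmodType) (q : nat).
Implicit Types (b : 'I_q -> G) (c : 'I_q -> nat).

Definition lincomb b c : G := (\sum_i b i *+ c i)%R.

Lemma eq_lincomb b c c' : c =1 c' -> lincomb b c = lincomb b c'.
Proof. by move=> eq_c; apply: eq_bigr => i _; rewrite eq_c. Qed.

Lemma lincomb_seq b (s : seq 'I_q) :
  (\sum_(x <- s) b x)%R = lincomb b (fun i => count_mem i s).
Proof.
elim: s => [|y s IH]; first by rewrite big_nil /lincomb big1.
rewrite big_cons IH /lincomb /= -[RHS](eq_bigr _ (fun i _ => esym (mulrnDr _ _ _))).
rewrite big_split /=; congr (_ + _)%R.
by rewrite (bigD1 y) //= eqxx mulr1n big1 ?addr0 // => i; rewrite eq_sym => /negbTE ->.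
Qed.

Definition msort c : seq 'I_q :=
  sort (fun i j : 'I_q => i <= j) (flatten [seq nseq (c i) i | i <- enum 'I_q]).

Lemma count_msort c i : count_mem i (msort c) = c i.
Proof.
have /permP -> : perm_eq (msort c) (flatten [seq nseq (c i) i | i <- enum 'I_q]).
  by rewrite perm_sort.
rewrite count_flatten -map_comp sumnE big_map big_enum /=.
rewrite (bigD1 i) //= count_nseq /= eqxx mul1n big1 ?addn0 // => j.
by rewrite count_nseq /= => /negbTE ->.
Qed.

Lemma size_msort c : size (msort c) = \sum_i c i.
Proof. by rewrite -sum_count_mem; apply: eq_bigr => i _; rewrite count_msort. Qed.

Lemma msort_sorted c : sorted (fun i j : 'I_q => i <= j) (msort c).
Proof. by apply: sort_sorted => i j; apply: leq_total. Qed.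

Lemma lincomb_msort b c : (\sum_(x <- msort c) b x)%R = lincomb b c.
Proof. by rewrite lincomb_seq; apply: eq_lincomb => i; rewrite count_msort. Qed.

End LinearCombinations.

Section BhSets.

Variables (G : zmodType) (h q : nat) (b : 'I_q -> G).

Lemma Bh_set_lincomb_inj : Bh_set h b -> forall c c' : 'I_q -> nat,
  \sum_i c' i = \sum_i c i -> \sum_i c i <= h -> lincomb b c = lincomb b c' -> c =1 c'.
Proof.
move=> [_ Bb] c c' Ec le_h Eb i.
(* Pad both multiplicity vectors with h - sum c copies of i to reach size h. *)
set k := h - \sum_j c j.
pose pad (d : 'I_q -> nat) j := d j + (j == i) * k.
have sum_pad d : \sum_j pad d j = \sum_j d j + k.
  rewrite big_split /=; congr addn.
  by rewrite (bigD1 i) //= eqxx mul1n big1 ?addn0 // => j /negbTE ->.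
have lincomb_pad d : lincomb b (pad d) = (lincomb b d + b i *+ k)%R.
  rewrite /lincomb -(eq_bigr _ (fun j _ => esym (mulrnDr _ _ _))) big_split /=.
  congr (_ + _)%R; rewrite (bigD1 i) //= eqxx mul1n big1 ?addr0 // => j /negbTE ->.
  by rewrite mul0n mulr0n.
have size_pad d : \sum_j d j = \sum_j c j -> size (msort (pad d)) == h.
  by move=> Ed; rewrite size_msort sum_pad Ed subnKC.
have := Bb (Tuple (size_pad c erefl)) (Tuple (size_pad c' Ec)).
rewrite -!(@big_tuple _ _ _ _ _ _ xpredT) /= !lincomb_msort !lincomb_pad Eb.
move=> /(_ (msort_sorted _) (msort_sorted _) erefl) /(congr1 (fun t => count_mem i (val t))).
by rewrite /= !count_msort /pad => /eqP; rewrite eqn_add2r => /eqP.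
Qed.

Lemma lincomb_inj_Bh_set : injective b ->
    (forall c c' : 'I_q -> nat, \sum_i c i = h -> \sum_i c' i = h ->
       lincomb b c = lincomb b c' -> c =1 c') ->
  Bh_set h b.
Proof.
move=> inj_b inj_c; split => // s t sorted_s sorted_t.
rewrite -!(@big_tuple _ _ _ _ _ _ xpredT) !lincomb_seq => /inj_c.
rewrite !sum_count_mem !size_tuple => /(_ erefl erefl) count_st.
apply: val_inj; apply: (sorted_eq (leT := fun i j : 'I_q => i <= j)) => //.
- by move=> x y z; apply: leq_trans.
- by move=> x y /anti_leq /val_inj.
- by apply/allP => x _; rewrite /= count_st eqxx.
Qed.

End BhSets.

Definition unit_row q h (i : 'I_q) : 'rV['Z_h.+1]_q := delta_mx ord0 i.

Lemma lincomb_unit_row q h (c : 'I_q -> nat) j :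
  lincomb (@unit_row q h) c ord0 j = (c j)%:R%R.
Proof.
rewrite /lincomb summxE (bigD1 j) //= mulmxnE mxE !eqxx /= mulr1n big1 ?addr0 // => i ne_ij.
by rewrite mulmxnE mxE eq_sym (negbTE ne_ij) mul0rn.
Qed.

Lemma Bh_set_unit_row q h : 0 < h -> Bh_set h (@unit_row q h).
Proof.
move=> h_gt0; apply: lincomb_inj_Bh_set.
  move=> i j /(congr1 (fun A : 'rV__ => A ord0 i)); rewrite !mxE !eqxx /=.
  by case: eqVneq => // _ /eqP; rewrite oner_eq0.
move=> c c' Sc Sc' E j; have := congr1 (fun A : 'rV__ => A ord0 j) E.
rewrite /= !lincomb_unit_row => /(congr1 val); rewrite /= !val_Zp_nat ?ltnS //.
have le_h (d : 'I_q -> nat) : \sum_i d i = h -> d j <= h.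
  by move=> <-; rewrite (bigD1 j) //= leq_addr.
by rewrite !modn_small ?ltnS ?le_h.
Qed.

Lemma exists_is_phi h q : 0 < h -> exists phi, is_phi h q phi.
Proof.
move=> h_gt0.
pose P m := exists (G : finZmodType) (b : 'I_q -> G), Bh_set h b /\ #|G| = m.
have P_rows : P #|'rV['Z_h.+1]_q|.
  by exists _, (@unit_row q h); split; first exact: Bh_set_unit_row.
have [m [[Pm min_m] _]] :=
  @dec_inh_nat_subset_has_unique_least_element P (fun m => classic (P m)) (ex_intro _ _ P_rows).
exists m; split => [|G b Bb]; first exact: Pm.
by apply/ssrnat.leP; apply: min_m; exists G, b.
Qed.

Definition simplex q n : {set point q n} := [set x | in_simplex x].

Lemma card_simplex q n : #|simplex q.+1 n| = 'C(n + q, q).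
Proof.
rewrite addnC -card_ord_partitions -!sum1dep_card.
rewrite (reindex (fun t : q.+1.-tuple 'I_n.+1 => [ffun i => tnth t i])) /=.
  apply: eq_bigl => t; rewrite /in_simplex (@big_tuple _ _ _ _ _ _ xpredT).
  by under eq_bigr do rewrite ffunE.
exists (fun x : point q.+1 n => [tuple x i | i < q.+1]) => [t | x] _.
  by apply: eq_from_tnth => i; rewrite tnth_mktuple ffunE.
by apply/ffunP => i; rewrite ffunE tnth_mktuple.
Qed.

Lemma ltr_d1 q n h (x y : point q n) :
  (h%:R < d1 x y)%R = (2 * h < \sum_i absdiff (x i) (y i)).
Proof. by rewrite /d1 ltr_pdivlMr ?ltr0n // -natrM ltr_nat mulnC. Qed.

Lemma leq_card_M q n h (C : {set point q n}) : is_code h C -> #|C| <= M q n h.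
Proof. exact: (@leq_bigmax_cond _ (fun C => is_code h C) (fun C => #|C|)). Qed.

Lemma M_attained q n h : exists2 C : {set point q n}, is_code h C & M q n h = #|C|.
Proof.
have codes_gt0 : 0 < #|[pred C : {set point q n} | is_code h C]|.
  apply/card_gt0P; exists set0; rewrite inE.
  by apply/andP; split; apply/forallP => x; rewrite inE.
have [C codeC max_C] := eq_bigmax_cond (fun C : {set point q n} => #|C|) codes_gt0.
by exists C; rewrite // -max_C.
Qed.

Lemma pigeonhole_fiber (T I : finType) (f : T -> I) (A : {set T}) (i0 : I) :
  exists i, #|A| <= #|I| * #|[set x in A | f x == i]|.
Proof.
have -> : #|A| = \sum_i #|[set x in A | f x == i]|.
  rewrite -sum1_card (partition_big f xpredT) //=.
  by apply: eq_bigr => i _; rewrite sum1dep_card.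
exists [arg max_(i > i0) #|[set x in A | f x == i]|].
case: arg_maxnP => // i _ max_i; rewrite -sum_nat_const.
by apply: leq_sum => j _; apply: max_i.
Qed.

Section LowerBound.

Variables (G : zmodType) (h q n : nat) (b : 'I_q -> G).
Hypothesis Bb : Bh_set h b.

Lemma Bh_set_close_eq (x y : point q n) : in_simplex x -> in_simplex y ->
    lincomb b (fun i => x i) = lincomb b (fun i => y i) ->
    \sum_i absdiff (x i) (y i) <= 2 * h ->
  x = y.
Proof.
move=> /eqP Sx /eqP Sy Exy close.
pose u i := (x i : nat) - y i; pose v i := (y i : nat) - x i.
have Euv : \sum_i v i = \sum_i u i.
  suff : \sum_i (x i : nat) + \sum_i v i = \sum_i (y i : nat) + \sum_i u i.
    by rewrite Sx Sy => /addnI.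
  by rewrite -!big_split; apply: eq_bigr => i _; rewrite /u /v /=; lia.
have le_uh : \sum_i u i <= h.
  have Eabs : \sum_i absdiff (x i) (y i) = \sum_i u i + \sum_i v i by rewrite -big_split.
  lia.
have Ecomb : lincomb b u = lincomb b v.
  suff : (lincomb b (fun i => x i) + lincomb b v = lincomb b (fun i => y i) + lincomb b u)%R.
    by rewrite Exy => /addrI.
  rewrite /lincomb -!big_split; apply: eq_bigr => i _ /=; rewrite -!mulrnDr.
  by congr (_ *+ _)%R; rewrite /u /v; lia.
have uv := Bh_set_lincomb_inj Bb Euv le_uh Ecomb.
apply/ffunP => i; apply: ord_inj; have := uv i; rewrite /u /v.
by move: (x i : nat) (y i : nat) => s t; lia.
Qed.

Lemma fiber_is_code g :
  is_code h [set x in simplex q n | lincomb b (fun i => x i) == g].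
Proof.
apply/andP; split; apply/forallP => x; apply/implyP; rewrite !inE => /andP[Sx /eqP gx] //.
apply/forallP => y; apply/implyP; rewrite !inE => /andP[Sy /eqP gy].
apply/implyP; apply: contraR; rewrite ltr_d1 -leqNgt => close; apply/eqP.
exact: Bh_set_close_eq Sx Sy (etrans gx (esym gy)) close.
Qed.

End LowerBound.

Lemma card_simplex_le_M (G : finZmodType) h q n (b : 'I_q.+1 -> G) :
  Bh_set h b -> 'C(n + q, q) <= #|G| * M q.+1 n h.
Proof.
move=> Bb; have [g le_fiber] :=
  pigeonhole_fiber (fun x : point q.+1 n => lincomb b (fun i => x i)) (simplex q.+1 n) 0%R.
rewrite -card_simplex (leq_trans le_fiber) // leq_mul2l leq_card_M ?orbT //.
exact: fiber_is_code.
Qed.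

Definition box q n (c : 'I_q -> nat) : {set point q n} :=
  [set x : point q n | [forall i, c i <= x i]].

Lemma card_simplex_box q n (c : 'I_q.+1 -> nat) : \sum_i c i <= n ->
  'C(n - \sum_i c i + q, q) <= #|simplex q.+1 n :&: box n c|.
Proof.
set K := \sum_i c i => le_Kn.
pose sh (w : point q.+1 (n - K)) : point q.+1 n := [ffun i => inord (w i + c i)].
have sum_sh w : w \in simplex q.+1 (n - K) -> \sum_i (w i + c i) = n.
  by rewrite inE => /eqP Sw; rewrite big_split /= Sw subnK.
have shE w i : w \in simplex q.+1 (n - K) -> (sh w i : nat) = w i + c i.
  move=> Sw; rewrite ffunE inordK // ltnS.
  by apply: leq_trans (leq_sum_ord (fun j => w j + c j) i) _; rewrite sum_sh.
rewrite -card_simplex -(card_in_imset (f := sh)) => [|w w' Sw Sw' E].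
  apply/subset_leq_card/subsetP => _ /imsetP[w Sw ->].
  rewrite !inE /in_simplex; apply/andP; split.
    apply/eqP; rewrite -[RHS](sum_sh w Sw).
    by apply: eq_bigr => i _; rewrite shE.
  by apply/forallP => i; rewrite shE // leq_addl.
apply/ffunP => i; apply: ord_inj; apply/eqP.
by rewrite -(eqn_add2r (c i)) -!shE // E.
Qed.

Lemma card_simplex_out_box r n (c : 'I_r.+2 -> nat) :
  #|simplex r.+2 n :\: box n c| <= \sum_(1 <= j < (\sum_i c i).+1) 'C(n + r.+1 - j, r).
Proof.
set K := \sum_i c i; case: (leqP K n) => [le_Kn | lt_nK].
  rewrite cardsD card_simplex (bin_telescope _ le_Kn).
  have := card_simplex_box le_Kn; rewrite -/K; lia.
apply: leq_trans (subset_leq_card (subsetDl _ _)) _.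
rewrite card_simplex (bin_telescope _ (leqnn n)) subnn add0n binn.
apply: leq_trans (@leq_sum_nat_widen (fun j => 'C(n + r.+1 - j, r)) 1 n.+2 K.+1 lt_nK).
rewrite [X in _ <= X]big_nat_recr //= addnC (_ : n + r.+1 - n.+1 = r) ?binn //.
by rewrite addnS subSS addKn.
Qed.

Definition corner q (a b : nat) (i : 'I_q.+1) : nat := if i == ord0 then a else b.

Section BallPacking.

Variables (r n a b : nat).
Local Notation offs := (offsets (a + b).+1 b r a b).
Implicit Types (x y : point r.+1 n) (t u : r.-tuple 'I_(a + b).+1).

Let pos t := \sum_(j < r) (tnth t j - b).
Let neg t := \sum_(j < r) (b - tnth t j).

Lemma offsets_pos_neg t : t \in offs -> pos t <= a /\ neg t <= b.
Proof. by rewrite inE !big_tuple => /andP. Qed.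

(* Translation by (- sum_j z_j, z) with z_j = t_j - b; it preserves the
   coordinate sum. *)
Definition shift_coord x t (i : 'I_r.+1) : nat :=
  if unlift ord0 i is Some j then x i + tnth t j - b else x i + neg t - pos t.

Definition ball_shift x t : point r.+1 n := [ffun i => inord (shift_coord x t i)].

Lemma shift_coord0 x t : shift_coord x t ord0 = x ord0 + neg t - pos t.
Proof. by rewrite /shift_coord unlift_none. Qed.

Lemma shift_coordS x t j : shift_coord x t (lift ord0 j) = x (lift ord0 j) + tnth t j - b.
Proof. by rewrite /shift_coord liftK. Qed.

Lemma box_corner x : x \in box n (corner a b) ->
  a <= x ord0 /\ forall j, b <= x (lift ord0 j).
Proof.
rewrite inE => /forallP le_x; split; first by have := le_x ord0; rewrite /corner eqxx.
by move=> j; have := le_x (lift ord0 j); rewrite /corner eq_sym (negbTE (neq_lift _ _)).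
Qed.

Section Admissible.

Variables (x : point r.+1 n) (t : r.-tuple 'I_(a + b).+1).
Hypotheses (Sx : x \in simplex r.+1 n) (Bx : x \in box n (corner a b)) (Ot : t \in offs).

Lemma sum_shift_coord : \sum_i shift_coord x t i = n.
Proof.
move: Sx; rewrite inE => /eqP; rewrite !big_ord_recl shift_coord0.
have [le_a le_b] := box_corner Bx; have [Pt _] := offsets_pos_neg Ot.
have E : \sum_(j < r) shift_coord x t (lift ord0 j) + neg t
         = \sum_(j < r) (x (lift ord0 j) : nat) + pos t.
  rewrite /neg /pos -!big_split; apply: eq_bigr => j _ /=; rewrite shift_coordS.
  by move: (le_b j); move: (x (lift ord0 j) : nat) (tnth t j : nat) => ? ?; lia.
by move: E le_a Pt; move: (x ord0 : nat) => ? ? ? ?; lia.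
Qed.

Lemma ball_shiftE i : (ball_shift x t i : nat) = shift_coord x t i.
Proof.
rewrite ffunE inordK // ltnS.
by apply: leq_trans (leq_sum_ord (shift_coord x t) i) _; rewrite sum_shift_coord.
Qed.

Lemma ball_shift_simplex : ball_shift x t \in simplex r.+1 n.
Proof.
rewrite inE; apply/eqP; rewrite -[RHS]sum_shift_coord.
by apply: eq_bigr => i _; rewrite ball_shiftE.
Qed.

End Admissible.

Section Collision.

Variables (x y : point r.+1 n) (t u : r.-tuple 'I_(a + b).+1).
Hypotheses (Sx : x \in simplex r.+1 n) (Bx : x \in box n (corner a b)) (Ot : t \in offs).
Hypotheses (Sy : y \in simplex r.+1 n) (By : y \in box n (corner a b)) (Ou : u \in offs).
Hypothesis Exy : ball_shift x t = ball_shift y u.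

Lemma ball_shift_coord i : shift_coord x t i = shift_coord y u i.
Proof. by rewrite -(ball_shiftE Sx Bx Ot) -(ball_shiftE Sy By Ou) Exy. Qed.

Lemma ball_shift_close : \sum_i absdiff (x i) (y i) <= 2 * (a + b).
Proof.
have [le_ax le_bx] := box_corner Bx; have [le_ay le_by] := box_corner By.
have [Pt Nt] := offsets_pos_neg Ot; have [Pu Nu] := offsets_pos_neg Ou.
set dp := \sum_(j < r) (tnth t j - tnth u j).
set dm := \sum_(j < r) (tnth u j - tnth t j).
have Etail : \sum_(j < r) absdiff (x (lift ord0 j)) (y (lift ord0 j)) = dp + dm.
  rewrite -big_split; apply: eq_bigr => j _ /=.
  have := ball_shift_coord (lift ord0 j); rewrite !shift_coordS /absdiff.
  move: (le_bx j) (le_by j).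
  by move: (x (lift ord0 j) : nat) (y (lift ord0 j) : nat) (tnth t j : nat) (tnth u j : nat); lia.
have le_dp : dp <= pos t + neg u.
  rewrite /pos /neg -big_split; apply: leq_sum => j _ /=.
  by move: (tnth t j : nat) (tnth u j : nat); lia.
have le_dm : dm <= pos u + neg t.
  rewrite /pos /neg -big_split; apply: leq_sum => j _ /=.
  by move: (tnth t j : nat) (tnth u j : nat); lia.
have Ebal : dp + neg t + pos u = dm + pos t + neg u.
  rewrite /pos /neg -!big_split; apply: eq_bigr => j _ /=.
  by move: (tnth t j : nat) (tnth u j : nat); lia.
have := ball_shift_coord ord0; rewrite !shift_coord0 big_ord_recl Etail /absdiff.
move: Ebal le_dp le_dm le_ax le_ay Pt Nt Pu Nu.
by move: (x ord0 : nat) (y ord0 : nat) (pos t) (neg t) (pos u) (neg u); lia.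
Qed.

End Collision.

Lemma ball_shift_inj x t u : x \in simplex r.+1 n -> x \in box n (corner a b) ->
  t \in offs -> u \in offs -> ball_shift x t = ball_shift x u -> t = u.
Proof.
move=> Sx Bx Ot Ou E; have [_ le_b] := box_corner Bx.
apply: eq_from_tnth => j; apply: ord_inj.
have := ball_shift_coord Sx Bx Ot Sx Bx Ou E (lift ord0 j); rewrite !shift_coordS.
by move: (le_b j); move: (x (lift ord0 j) : nat) (tnth t j : nat) (tnth u j : nat); lia.
Qed.

Lemma code_box_packing (C : {set point r.+1 n}) : is_code (a + b) C ->
  #|C :&: box n (corner a b)| * ball_size r a b <= 'C(n + r, r).
Proof.
move=> /andP[/forallP C_simplex /forallP C_far].
have C_S x : x \in C -> x \in simplex r.+1 n.
  by move=> Cx; have := C_simplex x; rewrite Cx inE.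
rewrite -(@card_offsets (a + b).+1 b r a b) // -cardsX -card_simplex.
rewrite -(card_in_imset (f := fun p => ball_shift p.1 p.2)) => [|[x t] [y u]]; last first.
  rewrite !in_setX !in_setI /= => /andP[/andP[Cx Bx] Ot] /andP[/andP[Cy By] Ou] /= E.
  have [exy | nxy] := eqVneq x y.
    by subst y; rewrite (ball_shift_inj (C_S x Cx) Bx Ot Ou E).
  have := C_far x; rewrite Cx => /forallP /(_ y); rewrite Cy nxy /= ltr_d1 ltnNge.
  by rewrite (ball_shift_close (C_S x Cx) Bx Ot (C_S y Cy) By Ou E).
apply/subset_leq_card/subsetP => z /imsetP[[x t]].
rewrite in_setX in_setI /= => /andP[/andP[Cx Bx] Ot] ->.
exact: ball_shift_simplex (C_S x Cx) Bx Ot.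
Qed.

End BallPacking.

Lemma uphalf_add_half h : uphalf h + h./2 = h.
Proof. by rewrite uphalf_half -addnA addnn odd_double_half. Qed.

Lemma code_card_le_box r n h (C : {set point r.+2 n}) : is_code h C ->
  #|C| <= #|C :&: box n (corner (uphalf h) h./2)|
          + \sum_(1 <= j < (r.+2 * uphalf h).+1) 'C(n + r.+1 - j, r).
Proof.
move=> /andP[/forallP C_simplex _]; set c := corner _ _.
have sub_C : C \subset simplex r.+2 n.
  by apply/subsetP => x Cx; have := C_simplex x; rewrite Cx inE.
rewrite -(cardsID (box n c) C) leq_add2l.
apply: leq_trans (subset_leq_card (setSD _ sub_C)) _.
apply: leq_trans (card_simplex_out_box n c) (leq_sum_nat_widen _ _ _).
rewrite ltnS big_ord_recl /c /corner eqxx (eq_bigr (fun=> h./2)) //.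
rewrite sum_nat_const card_ord [X in _ <= X]mulSn leq_add2l leq_mul2l.
by rewrite uphalf_half leq_addl orbT.
Qed.

Theorem mainTheorem15 (q n h : nat) (hq : (2 <= q)%N) (hh : (1 <= h)%N)
    (hnh : (h < n)%N) :
  (exists phi : nat, is_phi h q phi /\
     ('C(n + q - 1, q - 1)%:R / phi%:R <= (M q n h)%:R :> rat)%R) /\
  ((M q n h)%:R <=
     'C(n + q - 1, q - 1)%:R / (beta h q)%:R
     + (\sum_(1 <= j < (q * uphalf h).+1) 'C(n + q - 1 - j, q - 2))%:R
     :> rat)%R.
Proof.
(* Both bounds hold for every n. *)
case: q hq => [|[|r]] // _; rewrite subSS subn0 addnS subSS subn0.
split.
  have [_ [[G [b [Bb <-]]] min_G]] := exists_is_phi r.+2 hh.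
  exists #|G|; split; first by split; [exists G, b | exact: min_G].
  have G_gt0 : (0 < #|G|)%N by apply/card_gt0P; exists 0%R.
  by rewrite ler_pdivrMr ?ltr0n // -natrM ler_nat mulnC (card_simplex_le_M _ Bb).
have [C codeC ->] := M_attained r.+2 n h.
rewrite (eq_big_nat _ _ (F2 := fun j => 'C(n + r.+1 - j, r))) => [|j _];
  last by rewrite !subSS subn0.
have := code_card_le_box codeC; rewrite -(ler_nat rat) natrD => /le_trans; apply.
rewrite lerD2r beta_ball_size ler_pdivlMr ?ltr0n ?ball_size_gt0 // -natrM ler_nat.
by apply: code_box_packing; rewrite uphalf_add_half.
Qed.
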